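(* Let $s$ and $K$ be probability densities with respect to Lebesgue measure on $\mathbb{R}$, and for $w>0$ set $K_w(y)=w^{-1}K(w^{-1}y)$. Let $g=\sqrt{s}$ and assume that $\omega_2(g,\eta)\le\phi(\eta)$ for all $\eta\ge0$, where $\omega_2(g,\eta)=\sup_{|z|\le\eta}\|g(\cdot+z)-g\|$ and $\phi$ is a nondecreasing concave function on $[0,\infty)$ with $\phi(0)=0$. Then for every $w>0$, \[ \left\|\sqrt{s}-\sqrt{K_w\ast s}\right\|^2\le2\left[\int_{\mathbb{R}}(1\vee x^2)K(x)\,dx\right]\phi^2(w). \]
   Context: $\|\cdot\|$ is the $\mathbb{L}_2$-norm with respect to Lebesgue measure, and $\ast$ denotes convolution. *)

From HB Require Import structures.
From mathcomp Require Import all_boot all_order all_algebra.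
From mathcomp Require Import all_classical all_reals all_analysis.
Set Implicit Arguments. Unset Strict Implicit. Unset Printing Implicit Defensive.
Import Order.TTheory GRing.Theory Num.Theory.
Import numFieldNormedType.Exports.
Local Open Scope classical_set_scope.
Local Open Scope ring_scope.

Notation leb := (@lebesgue_measure _).

Definition prob_density (R : realType) (f : R -> R) : Prop :=
  [/\ measurable_fun [set: R] f, (forall x, 0 <= f x)
    & (\int[@lebesgue_measure R]_x (f x)%:E = 1)%E].

Definition L2norm (R : realType) (f : R -> R) : \bar R :=
  Lnorm (@lebesgue_measure R) 2%:E (fun x => (f x)%:E).

Definition Kw (R : realType) (K : R -> R) (w : R) : R -> R :=
  fun y => w^-1 * K (w^-1 * y).

(* convolution (f * h)(x) = \int f(x - y) h(y) dy (real value; where the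
   integral is infinite -- a Lebesgue-null set for densities -- we take 0) *)
Definition convol (R : realType) (f h : R -> R) : R -> R :=
  fun x => \int[@lebesgue_measure R]_y (f (x - y) * h y).

Definition omega2 (R : realType) (g : R -> R) (eta : R) : \bar R :=
  ereal_sup [set L2norm (fun x => g (x + z) - g x) | z in [set z : R | `|z| <= eta]].

Definition nondecreasing_on_pos (R : realType) (phi : R -> R) : Prop :=
  forall x y : R, 0 <= x -> x <= y -> phi x <= phi y.

Definition concave_on_pos (R : realType) (phi : R -> R) : Prop :=
  forall (x y t : R), 0 <= x -> 0 <= y -> 0 <= t -> t <= 1 ->
    (1 - t) * phi x + t * phi y <= phi ((1 - t) * x + t * y).

From HB Require Import structures.
From mathcomp Require Import all_boot all_order all_algebra.
From mathcomp Require Import all_classical all_reals all_analysis.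
From mathcomp Require Import ring lra measurable_realfun.
Set Implicit Arguments. Unset Strict Implicit. Unset Printing Implicit Defensive.
Import Order.TTheory GRing.Theory Num.Theory.
Import numFieldNormedType.Exports.
Local Open Scope classical_set_scope.
Local Open Scope ring_scope.

(* Write g = sqrt s and k = K_w. As k is a probability density and
   (k * s)(x) = \int k(u) g(x - u)^2 du, the inequality
   (a - sqrt (E b^2))^2 <= E (a - b)^2 (a weak Cauchy-Schwarz, obtained here from
   2ab <= a (b^2 / t + t)) gives pointwise
   (g x - sqrt ((k * s) x))^2 <= \int k(u) (g x - g (x - u))^2 du.
   Integrating in x and exchanging the integrals (Tonelli) bounds the squared
   distance by \int k(u) omega_2(g, |u|)^2 du <= \int k(u) phi(|u|)^2 du.
   Concavity and phi(0) = 0 give phi(|u|) <= max(1, |u|/w) phi(w), and the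
   substitution u = w v turns the last integral into
   phi(w)^2 \int (1 \/ v^2) K(v) dv, which is half the claimed bound. *)

(* The lemmas for [x - y] and [x ^+ 2] come before those for [x + y] and
   [x * y], which unify with them up to unfolding. *)
Ltac measurable_arith := repeat first [ exact: measurable_cst
  | match goal with H : measurable_fun _ _ |- _ => exact: H end
  | match goal with H : forall _, measurable_fun _ _ |- _ => exact: H end
  | exact: measurable_id | apply: measurable_funB | apply: measurable_funD
  | apply: measurable_funX | apply: measurable_funM | apply: measurable_maxr ].
Ltac nonneg_arith := repeat first [ done | apply: sqr_ge0 | apply: addr_ge0
  | apply: mulr_ge0 | by rewrite le_max ler01
  | match goal with
    H : forall _, is_true (@Order.le _ _ _ _) |- _ => apply: H end ].
Ltac integral_side :=
  solve [ measurable_arith | move=> ?; nonneg_arith | nonneg_arith ].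

Section lebesgue_affine_change.
Context (R : realType) (a b : R).
Hypothesis a_neq0 : a != 0.
Local Notation leb := (@lebesgue_measure R).
Local Notation affine := ((fun u => a * u + b) : R -> measurableTypeR R).

Lemma measurable_affine : measurable_fun [set: R] affine.
Proof. by apply: measurable_funD => //; apply: measurable_funM. Qed.

Lemma lebesgue_measure_affine_ocitv X : ocitv X ->
  (leb X = `|a|%:E * leb (affine @^-1` X))%E.
Proof.
move=> [[x1 x2] _ <-] /=.
have [a_gt0|a_le0] := ltrP 0 a.
  have -> : affine @^-1` `]x1, x2] = `](x1 - b) / a, (x2 - b) / a]%classic.
    apply/seteqP; split => u /=;
      rewrite !in_itv /= ltr_pdivrMr // ler_pdivlMr //;
      by move=> /andP[? ?]; apply/andP; split; lra.
  rewrite !lebesgue_measure_itv /= !lte_fin ltr_pM2r ?invr_gt0 // ltrBlDr subrK.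
  case: ifPn => _; last by rewrite mule0.
  by rewrite -EFinM gtr0_norm //; congr EFin; field; lra.
have a_lt0 : a < 0 by rewrite lt_neqAle a_neq0.
have -> : affine @^-1` `]x1, x2] = `[(x2 - b) / a, (x1 - b) / a[%classic.
  apply/seteqP; split => u /=;
    rewrite !in_itv /= ltr_ndivlMr // ler_ndivrMr //;
    by move=> /andP[? ?]; apply/andP; split; lra.
rewrite !lebesgue_measure_itv /= !lte_fin ltr_nM2r ?invr_lt0 // ltrBlDr subrK.
case: ifPn => _; last by rewrite mule0.
by rewrite -EFinM ltr0_norm //; congr EFin; field; lra.
Qed.

Lemma lebesgue_measure_affine X : measurable X ->
  (leb X = `|a|%:E * leb (affine @^-1` X))%E.
Proof.
have := @lebesgue_measure_unique R
  (mscale (NngNum (normr_ge0 a)) (pushforward leb affine)).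
move=> /(_ measurable_affine) scaled_imageE mX.
rewrite (scaled_imageE _ X mX) //.
exact: lebesgue_measure_affine_ocitv.
Qed.

Lemma ge0_integral_affine (f : R -> \bar R) :
  measurable_fun [set: R] f -> (forall x, (0 <= f x)%E) ->
  (\int[leb]_x f x = `|a|%:E * \int[leb]_u f (a * u + b)%R)%E.
Proof.
move=> mf f0.
have := @eq_measure_integral _ _ _ setT
  (mscale (NngNum (normr_ge0 a)) (pushforward leb affine)) leb f.
move=> /(_ measurable_affine) ->; last first.
  by move=> A mA _; exact: lebesgue_measure_affine.
have := @ge0_integral_mscale _ _ _ (pushforward leb affine) setT measurableT
  (NngNum (normr_ge0 a)) f.
move=> /(_ measurable_affine) -> //=.
by rewrite ge0_integral_pushforward //; exact: measurable_affine.
Qed.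

End lebesgue_affine_change.

Lemma ge0_integral_reflect (R : realType) (x : R) (f : R -> \bar R) :
  measurable_fun [set: R] f -> (forall y, (0 <= f y)%E) ->
  (\int[lebesgue_measure]_y f y = \int[lebesgue_measure]_u f (x - u)%R)%E.
Proof.
move=> mf f0; have N1_neq0 : -1 != 0 :> R by rewrite oppr_eq0 oner_eq0.
rewrite (ge0_integral_affine x N1_neq0 mf f0).
by rewrite normrN1 mul1e; apply: eq_integral => u _; rewrite mulN1r addrC.
Qed.

Lemma ge0_integral_dilate (R : realType) (w : R) (f : R -> \bar R) : 0 < w ->
  measurable_fun [set: R] f -> (forall x, (0 <= f x)%E) ->
  (\int[lebesgue_measure]_u f (w^-1 * u)%R =
    w%:E * \int[lebesgue_measure]_v f v)%E.
Proof.
move=> w_gt0 mf f0; have w_neq0 : w^-1 != 0 by rewrite invr_eq0 gt_eqF.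
rewrite (ge0_integral_affine 0 w_neq0 mf f0).
rewrite muleA -EFinM ger0_norm ?invr_ge0 ?ltW // mulfV ?gt_eqF // mul1e.
by apply: eq_integral => u _; rewrite addr0.
Qed.

Section ge0_integral_fin.
Context d (T : measurableType d) (R : realType) (mu : {measure set T -> \bar R}).
Implicit Types f h : T -> R.

Lemma ge0_integralD_fin f h :
  measurable_fun [set: T] f -> measurable_fun [set: T] h ->
  (forall u, 0 <= f u) -> (forall u, 0 <= h u) ->
  (\int[mu]_u (f u + h u)%:E = \int[mu]_u (f u)%:E + \int[mu]_u (h u)%:E)%E.
Proof.
move=> mf mh f0 h0; under eq_integral do rewrite EFinD.
by apply: ge0_integralD => //;
  first [move=> u _; rewrite lee_fin | exact/measurable_EFinP].
Qed.

Lemma ge0_integralZl_fin (c : R) f : 0 <= c -> measurable_fun [set: T] f ->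
  (forall u, 0 <= f u) ->
  (\int[mu]_u (c * f u)%:E = c%:E * \int[mu]_u (f u)%:E)%E.
Proof.
move=> c0 mf f0; under eq_integral do rewrite EFinM.
by apply: ge0_integralZl_EFin => //;
  first [move=> u _; rewrite lee_fin | exact/measurable_EFinP].
Qed.

Lemma ge0_le_integral_fin f h :
  measurable_fun [set: T] f -> measurable_fun [set: T] h ->
  (forall u, 0 <= f u) -> (forall u, f u <= h u) ->
  (\int[mu]_u (f u)%:E <= \int[mu]_u (h u)%:E)%E.
Proof.
move=> mf mh f0 fh.
by apply: ge0_le_integral => //;
  first [move=> u _; rewrite lee_fin | exact/measurable_EFinP].
Qed.

End ge0_integral_fin.

Section convolution.
Context (R : realType).
Implicit Types f h : R -> R.

Lemma convolC f h : measurable_fun [set: R] f -> measurable_fun [set: R] h ->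
  (forall x, 0 <= f x) -> (forall x, 0 <= h x) -> convol f h = convol h f.
Proof.
move=> mf mh f0 h0; apply/funext => x; rewrite /convol /Rintegral.
rewrite (ge0_integral_reflect x); last by move=> y; rewrite lee_fin mulr_ge0.
  by congr fine; apply: eq_integral => u _; rewrite opprB addrC subrK mulrC.
apply/measurable_EFinP; apply: measurable_funM => //.
by apply: measurableT_comp mf _; apply: measurable_funB.
Qed.

Lemma measurable_convol f h :
  measurable_fun [set: R] f -> measurable_fun [set: R] h ->
  (forall x, 0 <= f x) -> (forall x, 0 <= h x) ->
  measurable_fun [set: R] (convol f h).
Proof.
move=> mf mh f0 h0.
pose F (p : R * R) := (f (p.1 - p.2) * h p.2)%:E.
have mF : measurable_fun [set: R * R] F.
  apply/measurable_EFinP; apply: measurable_funM.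
    by apply: measurableT_comp mf _; apply: measurable_funB.
  exact: measurableT_comp mh measurable_snd.
have F0 p : (0 <= F p)%E by rewrite lee_fin mulr_ge0.
apply: measurableT_comp (fine_measurable measurableT) _.
exact: (measurable_fun_fubini_tonelli_F (m2 := lebesgue_measure) _ mF F0).
Qed.

End convolution.

Lemma prob_density_Kw (R : realType) (K : R -> R) (w : R) :
  0 < w -> prob_density K -> prob_density (Kw K w).
Proof.
move=> w_gt0 [mK K0 intK].
have mKw : measurable_fun [set: R] (fun y => K (w^-1 * y)).
  by apply: measurableT_comp mK _; apply: measurable_funM.
have w_inv_ge0 : 0 <= w^-1 by rewrite invr_ge0 ltW.
split.
- exact: measurable_funM.
- by move=> y; apply: mulr_ge0.
rewrite ge0_integralZl_fin // (ge0_integral_dilate (f := fun v => (K v)%:E)) //.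
- by rewrite intK mule1 -EFinM mulVf ?gt_eqF.
- exact/measurable_EFinP.
Qed.

Lemma L2norm_expr2 (R : realType) (F : R -> R) :
  (L2norm F ^+ 2 = \int[lebesgue_measure]_x ((F x) ^+ 2)%:E)%E.
Proof.
rewrite /L2norm unlock /Lnorm.
under eq_integral do
  rewrite abse_EFin poweR_EFin powR_mulrn // real_normK ?num_real //.
have : (0 <= \int[lebesgue_measure]_x ((F x) ^+ 2)%:E)%E.
  by apply: integral_ge0 => x _; rewrite lee_fin sqr_ge0.
case: (\int[lebesgue_measure]_x _)%E => [r| |] //= r0.
  by rewrite lee_fin in r0; rewrite -EFinM powR12_sqrt // -expr2 sqr_sqrtr.
by rewrite invr_eq0 pnatr_eq0.
Qed.

Lemma L2norm_shift_le_omega2 (R : realType) (g : R -> R) (z eta : R) :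
  `|z| <= eta -> (L2norm (fun x => (g (x + z) - g x)%R) <= omega2 g eta)%E.
Proof. by move=> z_le; apply: ereal_sup_ubound; exists z. Qed.

Lemma concave_le_maxr_ratio (R : realType) (phi : R -> R) (w u : R) :
  0 < w -> 0 <= u -> nondecreasing_on_pos phi -> concave_on_pos phi ->
  phi 0 = 0 ->
  phi u <= Num.max 1 (u / w) * phi w.
Proof.
move=> w_gt0 u_ge0 phi_ndecr phi_concave phi0.
have phiw_ge0 : 0 <= phi w by rewrite -phi0 phi_ndecr // ltW.
have [u_le_w|w_lt_u] := lerP u w.
  apply: le_trans (phi_ndecr _ _ u_ge0 u_le_w) _.
  by apply: ler_peMl; rewrite ?le_max ?lexx.
have u_gt0 : 0 < u by exact: lt_trans w_lt_u.
have t_le1 : w / u <= 1 by rewrite ler_pdivrMr // mul1r ltW.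
have t_ge0 : 0 <= w / u by rewrite divr_ge0 // ltW.
have := phi_concave 0 u (w / u) (lexx 0) u_ge0 t_ge0 t_le1.
rewrite phi0 !(mulr0, add0r) divfK ?gt_eqF // => concave_w.
have ratio_ge1 : 1 <= u / w by rewrite ler_pdivlMr // mul1r ltW.
have -> : phi u = u / w * (w / u * phi u) by field; rewrite !gt_eqF.
by rewrite max_r // ler_wpM2l // divr_ge0 // ltW.
Qed.

Lemma sqr_max1 (R : realDomainType) (y : R) :
  0 <= y -> Num.max 1 y ^+ 2 = Num.max 1 (y ^+ 2).
Proof.
move=> y_ge0; have [y_le1|y_gt1] := lerP y 1.
  by rewrite !max_l ?expr1n ?exprn_ile1.
by rewrite !max_r ?exprn_ege1 ?ltW.
Qed.

Lemma sqr_sub_sqrt_le (R : rcfType) (a r q : R) :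
  0 <= a -> 0 <= r -> 0 <= q ->
  (forall t, 0 < t -> a ^+ 2 + r <= q + a / t * r + a * t) ->
  (a - Num.sqrt r) ^+ 2 <= q.
Proof.
move=> a_ge0 r_ge0 q_ge0 amgm.
have [r_gt0|r_le0] := ltrP 0 r.
  have sqrt_gt0 : 0 < Num.sqrt r by rewrite sqrtr_gt0.
  have := amgm _ sqrt_gt0.
  have -> : a / Num.sqrt r * r = a * Num.sqrt r.
    by rewrite -{2}(sqr_sqrtr r_ge0) expr2 mulrA divfK ?gt_eqF.
  by rewrite sqrrB sqr_sqrtr //; lra.
have r0 : r = 0 by apply/le_anti/andP.
subst r; rewrite sqrtr0 subr0.
rewrite leNgt; apply/negP => q_lt_a2.
have a_gt0 : 0 < a.
  rewrite lt_neqAle a_ge0 andbT; apply: contraTneq q_lt_a2 => <-.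
  by rewrite expr0n /= -leNgt.
have t_gt0 : 0 < (a ^+ 2 - q) / (2 * a) by rewrite divr_gt0 ?subr_gt0 ?mulr_gt0.
have := amgm _ t_gt0; rewrite mulr0 !addr0.
have -> : a * ((a ^+ 2 - q) / (2 * a)) = (a ^+ 2 - q) / 2.
  by field; rewrite gt_eqF.
lra.
Qed.

Section second_moment.
Context (R : realType) (k b : R -> R) (a : R).
Hypotheses (k_density : prob_density k) (mb : measurable_fun [set: R] b).
Hypothesis a_ge0 : 0 <= a.
Local Notation leb := (@lebesgue_measure R).
Local Notation J := (\int[leb]_u (k u * b u ^+ 2)%:E)%E.
Local Notation Q := (\int[leb]_u (k u * (a - b u) ^+ 2)%:E)%E.

Let mk : measurable_fun [set: R] k. Proof. by case: k_density. Qed.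
Let k_ge0 u : 0 <= k u. Proof. by case: k_density. Qed.
Let k_int1 : (\int[leb]_u (k u)%:E = 1)%E. Proof. by case: k_density. Qed.

Lemma moment_le_dev : (J <= 2%:E * Q + (2 * a ^+ 2)%:E)%E.
Proof.
have -> : (2%:E * Q + (2 * a ^+ 2)%:E =
    \int[leb]_u (2 * (k u * (a - b u) ^+ 2) + 2 * a ^+ 2 * k u)%:E)%E.
  rewrite ge0_integralD_fin ?ge0_integralZl_fin ?k_int1 ?mule1 //;
    integral_side.
apply: ge0_le_integral_fin; try integral_side.
move=> u; rewrite -subr_ge0.
have -> : 2 * (k u * (a - b u) ^+ 2) + 2 * a ^+ 2 * k u - k u * b u ^+ 2
    = k u * (2 * a - b u) ^+ 2 by ring.
by rewrite mulr_ge0 ?sqr_ge0.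
Qed.

Lemma moment_amgm t : 0 < t ->
  ((a ^+ 2)%:E + J <= Q + (a / t)%:E * J + (a * t)%:E)%E.
Proof.
move=> t_gt0; have at_ge0 : 0 <= a / t by rewrite divr_ge0 // ltW.
have a_t_ge0 : 0 <= a * t by rewrite mulr_ge0 // ltW.
have -> : ((a ^+ 2)%:E + J = \int[leb]_u (a ^+ 2 * k u + k u * b u ^+ 2)%:E)%E.
  rewrite ge0_integralD_fin ?ge0_integralZl_fin ?k_int1 ?mule1 //;
    integral_side.
have -> : (Q + (a / t)%:E * J + (a * t)%:E = \int[leb]_u
    (k u * (a - b u) ^+ 2 + a / t * (k u * b u ^+ 2) + a * t * k u)%:E)%E.
  rewrite !ge0_integralD_fin ?ge0_integralZl_fin ?k_int1 ?mule1 //;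
    integral_side.
apply: ge0_le_integral_fin; try integral_side.
move=> u; rewrite -subr_ge0.
have -> : k u * (a - b u) ^+ 2 + a / t * (k u * b u ^+ 2) + a * t * k u
    - (a ^+ 2 * k u + k u * b u ^+ 2) = a / t * k u * (b u - t) ^+ 2.
  by field; rewrite gt_eqF.
by rewrite mulr_ge0 ?sqr_ge0 // mulr_ge0.
Qed.

(* If [J] is infinite then [fine J = 0], but then [Q] is infinite as well by
   [moment_le_dev]. *)
Lemma sqr_sub_sqrt_moment_le :
  (((a - Num.sqrt (fine J)) ^+ 2)%:E <= Q)%E.
Proof.
have := moment_amgm; have := moment_le_dev.
have : (0 <= J)%E.
  by apply: integral_ge0 => u _; rewrite lee_fin mulr_ge0 ?sqr_ge0.
have : (0 <= Q)%E.
  by apply: integral_ge0 => u _; rewrite lee_fin mulr_ge0 ?sqr_ge0.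
case: Q => [q| |] // q_ge0; last by rewrite leey.
case: J => [r| |] // r_ge0.
move=> _ amgm; rewrite /= lee_fin.
(* on finite values the extended-real inequality [amgm] computes to a real one *)
by apply: sqr_sub_sqrt_le; rewrite -?lee_fin.
Qed.

End second_moment.

Section smoothed_sqrt_density.
Context (R : realType) (s K phi : R -> R) (w : R).
Hypotheses (s_density : prob_density s) (K_density : prob_density K).
Hypotheses (phi_ndecr : nondecreasing_on_pos phi)
  (phi_concave : concave_on_pos phi) (phi0 : phi 0 = 0).
Hypothesis omega2_le_phi : forall eta, 0 <= eta ->
  (omega2 (fun x => Num.sqrt (s x)) eta <= (phi eta)%:E)%E.
Hypothesis w_gt0 : 0 < w.
Local Notation leb := (@lebesgue_measure R).
Local Notation k := (Kw K w).

Let g x := Num.sqrt (s x).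

Let ms : measurable_fun [set: R] s. Proof. by case: s_density. Qed.
Let s_ge0 x : 0 <= s x. Proof. by case: s_density. Qed.
Let k_density : prob_density k. Proof. exact: prob_density_Kw. Qed.
Let mK : measurable_fun [set: R] K. Proof. by case: K_density. Qed.
Let K_ge0 x : 0 <= K x. Proof. by case: K_density. Qed.
Let mk : measurable_fun [set: R] k. Proof. by case: k_density. Qed.
Let k_ge0 u : 0 <= k u. Proof. by case: k_density. Qed.

Let mg : measurable_fun [set: R] g.
Proof.
exact: measurableT_comp (continuous_measurable_fun (@sqrt_continuous R)) ms.
Qed.

Let measurable_g_subl (z : R) : measurable_fun [set: R] (fun x => g (z - x)).
Proof. by apply: measurableT_comp mg _; apply: measurable_funB. Qed.

Let measurable_g_subr (z : R) : measurable_fun [set: R] (fun x => g (x - z)).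
Proof. by apply: measurableT_comp mg _; apply: measurable_funB. Qed.

Lemma sqr_sub_sqrt_convol_le x :
  (((g x - Num.sqrt (convol k s x)) ^+ 2)%:E <=
    \int[leb]_u (k u * (g x - g (x - u)) ^+ 2)%:E)%E.
Proof.
have -> : convol k s x = fine (\int[leb]_u (k u * g (x - u) ^+ 2)%:E).
  rewrite convolC // /convol /Rintegral; congr fine.
  by apply: eq_integral => u _; rewrite sqr_sqrtr // mulrC.
by apply: sqr_sub_sqrt_moment_le => //; exact: sqrtr_ge0.
Qed.

Lemma shift_sqr_dist_le u :
  (\int[leb]_x ((g x - g (x - u)) ^+ 2)%:E <=
    (phi w ^+ 2 * Num.max 1 ((w^-1 * u) ^+ 2))%:E)%E.
Proof.
have phi_ge0 y : 0 <= y -> 0 <= phi y by move=> y_ge0; rewrite -phi0 phi_ndecr.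
have -> : (\int[leb]_x ((g x - g (x - u)) ^+ 2)%:E =
    L2norm (fun x => (g (x + - u) - g x)%R) ^+ 2)%E.
  by rewrite L2norm_expr2; apply: eq_integral => x _; rewrite -sqrrN opprB.
have shift_le : (L2norm (fun x => (g (x + - u) - g x)%R) <= (phi `|u|)%:E)%E.
  apply: le_trans (omega2_le_phi (normr_ge0 u)).
  by apply: L2norm_shift_le_omega2; rewrite normrN.
apply: le_trans (_ : (phi `|u| ^+ 2)%:E <= _)%E.
  by rewrite EFin_expe lee_sqr ?Lnorm_ge0 ?lee_fin ?phi_ge0.
have -> : (w^-1 * u) ^+ 2 = (`|u| / w) ^+ 2.
  by rewrite mulrC !exprMn real_normK ?num_real.
have ratio_ge0 : 0 <= `|u| / w by rewrite divr_ge0 // ltW.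
rewrite lee_fin mulrC -sqr_max1 // -exprMn lerXn2r ?nnegrE ?phi_ge0 //.
  by apply: mulr_ge0; [rewrite le_max ler01 | apply/phi_ge0/ltW].
exact: concave_le_maxr_ratio.
Qed.

Lemma moment_Kw : (\int[leb]_u (k u * Num.max 1 ((w^-1 * u) ^+ 2))%:E =
  \int[leb]_x (Num.max 1 (x ^+ 2) * K x)%:E)%E.
Proof.
pose G v := Num.max 1 (v ^+ 2) * K v.
have mG : measurable_fun [set: R] G.
  by apply: measurable_funM => //; exact: measurable_maxr.
have G_ge0 v : 0 <= G v by rewrite mulr_ge0 // le_max ler01.
have w_inv_ge0 : 0 <= w^-1 by rewrite invr_ge0 ltW.
transitivity (\int[leb]_u (w^-1 * G (w^-1 * u))%:E)%E.
  by apply: eq_integral => u _; rewrite /G /Kw; congr EFin; ring.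
rewrite ge0_integralZl_fin //; last first.
  by apply: measurableT_comp mG _; apply: measurable_funM.
rewrite (ge0_integral_dilate (f := fun v => (G v)%:E)) //; last first.
  exact/measurable_EFinP.
by rewrite muleA -EFinM mulVf ?gt_eqF // mul1e.
Qed.

Lemma L2norm_sqrt_convol_Kw_le :
  (L2norm (fun x => (g x - Num.sqrt (convol k s x))%R) ^+ 2 <=
    (phi w ^+ 2)%:E * \int[leb]_x (Num.max 1 (x ^+ 2) * K x)%:E)%E.
Proof.
pose H (p : R * R) := (k p.2 * (g p.1 - g (p.1 - p.2)) ^+ 2)%:E.
have mH : measurable_fun [set: R * R] H.
  apply/measurable_EFinP; apply: measurable_funM.
    exact: measurableT_comp mk measurable_snd.
  apply: measurable_funX; apply: measurable_funB.
    exact: measurableT_comp mg measurable_fst.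
  by apply: measurableT_comp mg _; apply: measurable_funB.
have H_ge0 p : (0 <= H p)%E by rewrite lee_fin mulr_ge0 ?sqr_ge0.
have msqrt_convol : measurable_fun [set: R] (fun x => Num.sqrt (convol k s x)).
  apply: measurableT_comp (continuous_measurable_fun (@sqrt_continuous R)) _.
  exact: measurable_convol.
rewrite L2norm_expr2.
apply: (@le_trans _ _ (\int[leb]_x \int[leb]_u H (x, u))%E).
  apply: ge0_le_integral => //.
  - by move=> x _; rewrite lee_fin sqr_ge0.
  - by apply/measurable_EFinP; measurable_arith.
  - exact: (measurable_fun_fubini_tonelli_F (m2 := leb) _ mH H_ge0).
  - by move=> x _; exact: sqr_sub_sqrt_convol_le.
rewrite (fubini_tonelli (m1 := leb) (m2 := leb) H mH H_ge0) /= -moment_Kw.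
rewrite -ge0_integralZl_fin ?sqr_ge0; try integral_side.
apply: ge0_le_integral => //.
- by move=> u _; apply: integral_ge0.
- exact: (measurable_fun_fubini_tonelli_G (m1 := leb) _ mH H_ge0).
- by apply/measurable_EFinP; measurable_arith.
move=> u _; rewrite /H /= ge0_integralZl_fin //; try integral_side.
rewrite mulrCA (EFinM (k u)); apply: lee_wpmul2l; first by rewrite lee_fin.
exact: shift_sqr_dist_le.
Qed.

End smoothed_sqrt_density.

Theorem lemma2 (R : realType) (s K phi : R -> R) :
  prob_density s -> prob_density K ->
  nondecreasing_on_pos phi -> concave_on_pos phi -> phi 0 = 0 ->
  (forall eta : R, 0 <= eta -> (omega2 (fun x => Num.sqrt (s x)) eta <= (phi eta)%:E)%E) ->
  forall w : R, 0 < w ->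
  (L2norm (fun x => (Num.sqrt (s x) - Num.sqrt (convol (Kw K w) s x))%R) ^+ 2
   <= 2%:E * (\int[@lebesgue_measure R]_x ((Num.max 1 (x ^+ 2)) * K x)%R%:E)
           * ((phi w) ^+ 2)%R%:E)%E.
Proof.
move=> s_density K_density phi_ndecr phi_concave phi0 omega2_le_phi w w_gt0.
apply: le_trans (L2norm_sqrt_convol_Kw_le s_density K_density phi_ndecr
  phi_concave phi0 omega2_le_phi w_gt0) _.
have moment_ge0 :
    (0 <= \int[lebesgue_measure]_x (Num.max 1 (x ^+ 2) * K x)%:E)%E.
  apply: integral_ge0 => x _; rewrite lee_fin mulr_ge0 ?le_max ?ler01 //.
  by case: K_density.
rewrite muleC -muleA; apply: lee_pemull.
  by rewrite mule_ge0 // lee_fin sqr_ge0.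
by rewrite lee_fin ler1n.
Qed.
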